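(* Let $L\dashv R:\mathcal{D}\rightleftarrows\mathcal{C}$ be an adjunction (with $L:\mathcal{D}\to\mathcal{C}$, unit $\eta$) where $\mathcal{D}$ is cartesian. Let $W$ be an object of $\mathcal{D}$ such that the counit of the sliced adjunction $L_W\dashv R_W:\mathcal{D}/W\rightleftarrows\mathcal{C}/LW$ is an isomorphism (so $L_WR_W\cong \mathrm{Id}_{\mathcal{C}/LW}$). Assume that for every object $X_\phi$ (i.e. $\phi:X\to LW$) of $\mathcal{C}/LW$, the unit $\eta^W$ of $L_W\dashv R_W$ is an isomorphism at the object $W^*\Sigma_WR_W(X_\phi)$. Then for any object $V_f$ (i.e. $f:V\to W$) of $\mathcal{D}/W$, $\eta^W_{W^*V}$ is an isomorphism if and only if $\eta^W_{V_f}$ is an isomorphism.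
   Context: Sliced adjunction at an object $W$ of $\mathcal{D}$: $L_W:\mathcal{D}/W\to\mathcal{C}/LW$ sends $g:V\to W$ to $Lg:LV\to LW$, and $R_W:\mathcal{C}/LW\to\mathcal{D}/W$ sends $h:Z\to LW$ to the pullback of $Rh:RZ\to RLW$ along the unit $\eta_W:W\to RLW$ (as an object over $W$). $\eta^W$ denotes the unit of $L_W\dashv R_W$. $\Sigma_W:\mathcal{D}/W\to\mathcal{D}$ is the forgetful functor (taking the domain), and $W^*:\mathcal{D}\to\mathcal{D}/W$ sends $A$ to the projection $\pi_1:W\times A\to W$; thus $W^*V$ is $\pi_1:W\times V\to W$. *)

Set Implicit Arguments.
Unset Strict Implicit.

Record Category := {
  ob :> Type;
  hom : ob -> ob -> Type;
  idm : forall a, hom a a;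
  comp : forall x y z, hom y z -> hom x y -> hom x z;
  comp_idl : forall a b (f : hom a b), comp (idm b) f = f;
  comp_idr : forall a b (f : hom a b), comp f (idm a) = f;
  comp_assoc : forall a b c d (f : hom a b) (g : hom b c) (h : hom c d),
      comp h (comp g f) = comp (comp h g) f
}.
Arguments hom {c} _ _ : rename.
Arguments idm {c} _ : rename.
Arguments comp {c x y z} _ _ : rename.
Notation "g ∘ f" := (comp g f) (at level 40, left associativity).

Record Functor (C D : Category) := {
  fobj : C -> D;
  fmap : forall a b, hom a b -> hom (fobj a) (fobj b);
  fmap_id : forall a, fmap (idm a) = idm (fobj a);
  fmap_comp : forall a b c (f : hom a b) (g : hom b c),
      fmap (g ∘ f) = fmap g ∘ fmap f
}.
Arguments fobj {C D} _ _.
Arguments fmap {C D} _ {a b} _.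

Record Adjunction (D C : Category) (L : Functor D C) (R : Functor C D) := {
  unit : forall X : D, hom X (fobj R (fobj L X));
  counit : forall Z : C, hom (fobj L (fobj R Z)) Z;
  unit_nat : forall X Y (f : hom X Y),
      fmap R (fmap L f) ∘ unit X = unit Y ∘ f;
  counit_nat : forall Z Z' (g : hom Z Z'),
      g ∘ counit Z = counit Z' ∘ fmap L (fmap R g);
  triangle_L : forall X : D, counit (fobj L X) ∘ fmap L (unit X) = idm _;
  triangle_R : forall Z : C, fmap R (counit Z) ∘ unit (fobj R Z) = idm _
}.
Arguments unit {D C L R} _ _.
Arguments counit {D C L R} _ _.

Record BinProducts (C : Category) := {
  prod : C -> C -> C;
  pr1 : forall a b, hom (prod a b) a;
  pr2 : forall a b, hom (prod a b) b;
  pairm : forall x a b, hom x a -> hom x b -> hom x (prod a b);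
  pair_pr1 : forall x a b (f : hom x a) (g : hom x b), pr1 a b ∘ pairm f g = f;
  pair_pr2 : forall x a b (f : hom x a) (g : hom x b), pr2 a b ∘ pairm f g = g;
  pair_uniq : forall x a b (f : hom x a) (g : hom x b) (h : hom x (prod a b)),
      pr1 a b ∘ h = f -> pr2 a b ∘ h = g -> h = pairm f g
}.
Arguments prod {C} _ _ _.
Arguments pr1 {C} _ _ _.

Record Terminal (C : Category) := {
  term : C;
  to_term : forall x, hom x term;
  to_term_uniq : forall x (h : hom x term), h = to_term x
}.

Record Cartesian (C : Category) := {
  cart_term : Terminal C;
  cart_prod : BinProducts C
}.

Record Pullbacks (C : Category) := {
  pb : forall a b c, hom a c -> hom b c -> C;
  pb1 : forall a b c (f : hom a c) (g : hom b c), hom (pb f g) a;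
  pb2 : forall a b c (f : hom a c) (g : hom b c), hom (pb f g) b;
  pb_comm : forall a b c (f : hom a c) (g : hom b c), f ∘ pb1 f g = g ∘ pb2 f g;
  pb_pair : forall a b c (f : hom a c) (g : hom b c) x (u : hom x a) (v : hom x b),
      f ∘ u = g ∘ v -> hom x (pb f g);
  pb_pair1 : forall a b c (f : hom a c) (g : hom b c) x (u : hom x a) (v : hom x b)
      (H : f ∘ u = g ∘ v), pb1 f g ∘ pb_pair H = u;
  pb_pair2 : forall a b c (f : hom a c) (g : hom b c) x (u : hom x a) (v : hom x b)
      (H : f ∘ u = g ∘ v), pb2 f g ∘ pb_pair H = v;
  pb_uniq : forall a b c (f : hom a c) (g : hom b c) x (u : hom x a) (v : hom x b)
      (H : f ∘ u = g ∘ v) (h : hom x (pb f g)),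
      pb1 f g ∘ h = u -> pb2 f g ∘ h = v -> h = pb_pair H
}.
Arguments pb {C} _ {a b c} _ _.
Arguments pb1 {C} _ {a b c} _ _.
Arguments pb2 {C} _ {a b c} _ _.
Arguments pb_pair {C} _ {a b c f g x u v} _.

Record SliceOb (C : Category) (W : C) := { sdom : C; sarr : hom sdom W }.
Arguments sdom {C W} _.
Arguments sarr {C W} _.

Definition slice_iso (C : Category) (W : C) (s t : SliceOb W)
  (u : hom (sdom s) (sdom t)) : Prop :=
  sarr t ∘ u = sarr s /\
  exists v : hom (sdom t) (sdom s),
    sarr s ∘ v = sarr t /\ v ∘ u = idm _ /\ u ∘ v = idm _.

(** Sigma_W : D/W -> D is [sdom]; W^* : D -> D/W sends A to pi_1 : W x A -> W. *)
Definition Wstar (D : Category) (P : BinProducts D) (W : D) (A : D) : SliceOb W :=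
  {| sdom := prod P W A; sarr := pr1 P W A |}.

Section Sliced.
Variables (D C : Category) (L : Functor D C) (R : Functor C D)
          (A : Adjunction L R) (PB : Pullbacks D) (W : D).

Definition LW (s : SliceOb W) : SliceOb (fobj L W) :=
  {| sdom := fobj L (sdom s); sarr := fmap L (sarr s) |}.

Definition RW (t : SliceOb (fobj L W)) : SliceOb W :=
  {| sdom := pb PB (fmap R (sarr t)) (unit A W);
     sarr := pb2 PB (fmap R (sarr t)) (unit A W) |}.

(** Unit eta^W of L_W -| R_W at V_f: the map V -> P induced by (eta_V, f). *)
Definition unitW (s : SliceOb W) : hom (sdom s) (sdom (RW (LW s))) :=
  pb_pair PB (unit_nat A (sarr s)).

Definition counitW (t : SliceOb (fobj L W)) : hom (sdom (LW (RW t))) (sdom t) :=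
  counit A (sdom t) ∘ fmap L (pb1 PB (fmap R (sarr t)) (unit A W)).

End Sliced.
Arguments LW {D C} L W s.
Arguments RW {D C L R} A PB W t.
Arguments unitW {D C L R} A PB W s.
Arguments counitW {D C L R} A PB W t.
Arguments slice_iso {C W} s t u.
Arguments Wstar {D} P W A.

(* The counit of L_W -| R_W being invertible makes C/LW, embedded by R_W, a
   reflective subcategory of D/W, with idempotent monad T = R_W L_W.  So η^W is
   invertible at s as soon as it has a retraction over W, this property is
   stable under retracts, and maps out of T s into an object where η^W is
   invertible are determined on η^W_s.
   Since R_W(id_LW) ≅ W, the hypothesis makes η^W invertible at W^*W; hence
   maps T(V_f) -> W are determined on η^W_{V_f}.  If η^W is invertible at W^*V,
   transporting the section <f, id> : V_f -> W^*V gives a retraction of η^W_{V_f}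
   (that it lies over W is checked after precomposing with η^W_{V_f}).
   Conversely, if η^W_{V_f} is invertible, W^*V is a retract of W^*Σ_W T(V_f),
   where η^W is invertible by hypothesis. *)

Set Implicit Arguments.
Unset Strict Implicit.

Lemma counit_transposeK (D C : Category) (L : Functor D C) (R : Functor C D)
  (A : Adjunction L R) (X : D) (Z : C) (h : hom X (fobj R Z)) :
  fmap R (counit A Z ∘ fmap L h) ∘ unit A X = h.
Proof.
  rewrite fmap_comp, <- comp_assoc, unit_nat, comp_assoc, triangle_R, comp_idl.
  reflexivity.
Qed.

Lemma pb_hom_ext (D : Category) (PB : Pullbacks D) (a b c : D) (f : hom a c)
  (g : hom b c) (X : D) (k1 k2 : hom X (pb PB f g)) :
  pb1 PB f g ∘ k1 = pb1 PB f g ∘ k2 -> pb2 PB f g ∘ k1 = pb2 PB f g ∘ k2 -> k1 = k2.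
Proof.
  intros E1 E2.
  assert (H : f ∘ (pb1 PB f g ∘ k1) = g ∘ (pb2 PB f g ∘ k1)).
  { rewrite !comp_assoc, pb_comm. reflexivity. }
  transitivity (pb_pair PB H).
  - apply pb_uniq; reflexivity.
  - symmetry. apply pb_uniq; auto.
Qed.

Section WstarMorphisms.
Variables (D : Category) (P : BinProducts D) (W : D).

Definition Wstar_map (X Y : D) (a : hom X Y) : hom (prod P W X) (prod P W Y) :=
  pairm P (pr1 P W X) (a ∘ pr2 P W X).

Lemma Wstar_map_over (X Y : D) (a : hom X Y) :
  pr1 P W Y ∘ Wstar_map a = pr1 P W X.
Proof. apply pair_pr1. Qed.

Lemma Wstar_map_section (X Y : D) (a : hom X Y) (b : hom Y X) :
  a ∘ b = idm Y -> Wstar_map a ∘ Wstar_map b = idm (prod P W Y).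
Proof.
  intro ab. transitivity (pairm P (pr1 P W Y) (pr2 P W Y)).
  - apply pair_uniq.
    + rewrite comp_assoc, !Wstar_map_over. reflexivity.
    + unfold Wstar_map.
      rewrite comp_assoc, pair_pr2, <- comp_assoc, pair_pr2, comp_assoc, ab, comp_idl.
      reflexivity.
  - symmetry. apply pair_uniq; apply comp_idr.
Qed.

Lemma pairm_comp (Z X a b : D) (p : hom X a) (q : hom X b) (h : hom Z X) :
  pairm P p q ∘ h = pairm P (p ∘ h) (q ∘ h).
Proof.
  apply pair_uniq; rewrite comp_assoc; [rewrite pair_pr1 | rewrite pair_pr2];
    reflexivity.
Qed.

End WstarMorphisms.

Section SlicedAdjunction.
Variables (D C : Category) (L : Functor D C) (R : Functor C D) (A : Adjunction L R)
          (PB : Pullbacks D) (W : D).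

Local Notation T s := (RW A PB W (LW L W s)).
Local Notation η := (unitW A PB W).
Local Notation ε := (counitW A PB W).

Definition unitW_invertible (s : SliceOb W) : Prop := slice_iso s (T s) (η s).

Lemma unitW_over (s : SliceOb W) : sarr (T s) ∘ η s = sarr s.
Proof. apply pb_pair2. Qed.

Lemma RW_pb1_transpose (t : SliceOb (fobj L W)) (X : D)
  (k : hom X (sdom (RW A PB W t))) :
  pb1 PB (fmap R (sarr t)) (unit A W) ∘ k = fmap R (ε t ∘ fmap L k) ∘ unit A X.
Proof.
  unfold counitW. rewrite <- comp_assoc, <- fmap_comp.
  symmetry. apply counit_transposeK.
Qed.

Lemma RW_hom_ext (t : SliceOb (fobj L W)) (X : D) (k1 k2 : hom X (sdom (RW A PB W t))) :
  sarr (RW A PB W t) ∘ k1 = sarr (RW A PB W t) ∘ k2 ->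
  ε t ∘ fmap L k1 = ε t ∘ fmap L k2 -> k1 = k2.
Proof.
  intros E2 Ec. apply pb_hom_ext; [| exact E2].
  rewrite !RW_pb1_transpose, Ec. reflexivity.
Qed.

Lemma counitW_unitW (s : SliceOb W) : ε (LW L W s) ∘ fmap L (η s) = idm _.
Proof.
  unfold counitW, unitW. simpl.
  rewrite <- comp_assoc, <- fmap_comp, pb_pair1, triangle_L. reflexivity.
Qed.

Section TMap.
Variables (s s' : SliceOb W) (g : hom (sdom s) (sdom s')) (Hg : sarr s' ∘ g = sarr s).

Lemma TW_map_subproof :
  fmap R (fmap L (sarr s')) ∘ (fmap R (fmap L g) ∘ pb1 PB (fmap R (fmap L (sarr s))) (unit A W))
  = unit A W ∘ pb2 PB (fmap R (fmap L (sarr s))) (unit A W).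
Proof. rewrite comp_assoc, <- !fmap_comp, Hg. apply pb_comm. Qed.

Definition TW_map : hom (sdom (T s)) (sdom (T s')) := pb_pair PB TW_map_subproof.

Lemma TW_map_over : sarr (T s') ∘ TW_map = sarr (T s).
Proof. apply pb_pair2. Qed.

Lemma unitW_natural : TW_map ∘ η s = η s' ∘ g.
Proof.
  apply pb_hom_ext; unfold TW_map, unitW; simpl.
  - rewrite !comp_assoc, !pb_pair1, <- comp_assoc, pb_pair1, unit_nat. reflexivity.
  - rewrite !comp_assoc, !pb_pair2, Hg. reflexivity.
Qed.

End TMap.

Hypothesis counitW_iso : forall t, slice_iso (LW L W (RW A PB W t)) t (ε t).

Lemma fmap_unitW_counitW (s : SliceOb W) :
  fmap L (η s) ∘ ε (LW L W s) = idm (fobj L (sdom (T s))).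
Proof.
  destruct (counitW_iso (LW L W s)) as [_ [v [_ [Hvu _]]]].
  (* the inverse of ε^W at L_W s is L η^W_s, by the triangle identity *)
  assert (Ev : fmap L (η s) = v).
  { transitivity ((v ∘ ε (LW L W s)) ∘ fmap L (η s)).
    - rewrite Hvu. symmetry. apply comp_idl.
    - rewrite <- comp_assoc, counitW_unitW. apply comp_idr. }
  rewrite Ev. exact Hvu.
Qed.

Lemma fmap_unitW_epi (s : SliceOb W) (Z : C) (x y : hom (fobj L (sdom (T s))) Z) :
  x ∘ fmap L (η s) = y ∘ fmap L (η s) -> x = y.
Proof.
  intro E. rewrite <- (comp_idr x), <- (comp_idr y), <- (fmap_unitW_counitW s).
  rewrite !comp_assoc, E. reflexivity.
Qed.

Lemma unitW_invertible_retraction (s : SliceOb W) (r : hom (sdom (T s)) (sdom s)) :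
  r ∘ η s = idm _ -> sarr s ∘ r = sarr (T s) -> unitW_invertible s.
Proof.
  intros Hr Hover. split; [apply unitW_over |].
  exists r. split; [exact Hover |]. split; [exact Hr |].
  apply RW_hom_ext.
  - rewrite comp_assoc, unitW_over, Hover, comp_idr. reflexivity.
  - apply fmap_unitW_epi.
    cbn [LW sdom].
    rewrite <- !comp_assoc, <- !fmap_comp, <- comp_assoc, Hr, comp_idr, comp_idl.
    reflexivity.
Qed.

Lemma unitW_invertible_retract (s s' : SliceOb W) (u : hom (sdom s) (sdom s'))
  (w : hom (sdom s') (sdom s)) :
  sarr s' ∘ u = sarr s -> sarr s ∘ w = sarr s' -> u ∘ w = idm _ ->
  unitW_invertible s -> unitW_invertible s'.
Proof.
  intros Hu Hw Huw [_ [i [Hi [Hiu _]]]].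
  apply (unitW_invertible_retraction (r := u ∘ i ∘ TW_map Hw)).
  - rewrite <- comp_assoc, unitW_natural, comp_assoc.
    rewrite <- (comp_assoc (η s) i u), Hiu, comp_idr. exact Huw.
  - rewrite !comp_assoc, Hu, Hi. apply TW_map_over.
Qed.

Lemma unitW_hom_ext (s Y : SliceOb W) (a b : hom (sdom (T s)) (sdom Y)) :
  unitW_invertible Y -> sarr Y ∘ a = sarr (T s) -> sarr Y ∘ b = sarr (T s) ->
  a ∘ η s = b ∘ η s -> a = b.
Proof.
  intros [HY [iY [_ [HiY _]]]] Ha Hb E.
  assert (EY : η Y ∘ a = η Y ∘ b).
  { apply RW_hom_ext.
    - rewrite !comp_assoc, !unitW_over, Ha, Hb. reflexivity.
    - apply fmap_unitW_epi. cbn [LW sdom].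
      rewrite <- !comp_assoc, <- !fmap_comp, <- !comp_assoc, E. reflexivity. }
  rewrite <- (comp_idl a), <- (comp_idl b), <- HiY, <- !comp_assoc, EY.
  reflexivity.
Qed.

Variable P : BinProducts D.

Lemma unitW_invertible_Wstar_retract (X Y : D) (a : hom X Y) (b : hom Y X) :
  a ∘ b = idm Y -> unitW_invertible (Wstar P W X) -> unitW_invertible (Wstar P W Y).
Proof.
  intro ab. apply (unitW_invertible_retract (s := Wstar P W X) (s' := Wstar P W Y)
           (u := Wstar_map P W a) (w := Wstar_map P W b)).
  - apply Wstar_map_over.
  - apply Wstar_map_over.
  - exact (Wstar_map_section P W ab).
Qed.

Lemma unitW_invertible_Wstar_base :
  unitW_invertible (Wstar P W (sdom (RW A PB W {| sdom := fobj L W; sarr := idm _ |}))) ->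
  unitW_invertible (Wstar P W W).
Proof.
  assert (Hsec : fmap R (idm (fobj L W)) ∘ unit A W = unit A W ∘ idm W).
  { rewrite fmap_id, comp_idl, comp_idr. reflexivity. }
  apply (unitW_invertible_Wstar_retract (pb_pair2 PB Hsec)).
Qed.

Lemma unitW_hom_ext_W (s : SliceOb W) (q1 q2 : hom (sdom (T s)) W) :
  unitW_invertible (Wstar P W W) -> q1 ∘ η s = q2 ∘ η s -> q1 = q2.
Proof.
  intros HWW E.
  assert (Epair : pairm P (sarr (T s)) q1 = pairm P (sarr (T s)) q2 :> hom _ (prod P W W)).
  { apply (unitW_hom_ext (Y := Wstar P W W)); [exact HWW | apply pair_pr1 | apply pair_pr1 |].
    cbn [Wstar sdom]. rewrite !pairm_comp, E. reflexivity. }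
  rewrite <- (pair_pr2 P (sarr (T s)) q1), <- (pair_pr2 P (sarr (T s)) q2), Epair.
  reflexivity.
Qed.

Lemma unitW_invertible_of_Wstar (V : D) (f : hom V W) :
  unitW_invertible (Wstar P W W) -> unitW_invertible (Wstar P W V) ->
  unitW_invertible {| sdom := V; sarr := f |}.
Proof.
  set (sf := {| sdom := V; sarr := f |}).
  intros HWW [_ [i [Hi [Hiu _]]]].
  assert (Hg : sarr (Wstar P W V) ∘ pairm P f (idm V) = sarr sf) by apply pair_pr1.
  set (x := i ∘ TW_map (s := sf) (s' := Wstar P W V) Hg).
  assert (Hx_over : sarr (Wstar P W V) ∘ x = sarr (T sf)).
  { unfold x. rewrite comp_assoc, Hi. apply TW_map_over. }
  assert (Hx : x ∘ η sf = pairm P f (idm V)).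
  { unfold x. rewrite <- comp_assoc, unitW_natural, comp_assoc, Hiu, comp_idl.
    reflexivity. }
  clearbody x.
  (* the cast keeps the middle object as [sdom (Wstar P W V)], so [Hx] rewrites *)
  apply (unitW_invertible_retraction (r := (pr2 P W V : hom (sdom (Wstar P W V)) V) ∘ x)).
  - rewrite <- comp_assoc, Hx. apply pair_pr2.
  - rewrite <- Hx_over. apply (unitW_hom_ext_W HWW).
    rewrite <- !comp_assoc, Hx. cbn [Wstar sdom sarr].
    rewrite pair_pr1, pair_pr2. apply comp_idr.
Qed.

Lemma unitW_invertible_Wstar_of_slice (V : D) (f : hom V W) :
  unitW_invertible (Wstar P W (sdom (T {| sdom := V; sarr := f |}))) ->
  unitW_invertible {| sdom := V; sarr := f |} -> unitW_invertible (Wstar P W V).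
Proof.
  intros HT [_ [j [_ [Hj _]]]].
  exact (unitW_invertible_Wstar_retract Hj HT).
Qed.

End SlicedAdjunction.

Theorem lemma2p1 (D C : Category) (L : Functor D C) (R : Functor C D)
  (A : Adjunction L R) (CD : Cartesian D) (PB : Pullbacks D) (W : D)
  (Hcounit : forall t : SliceOb (fobj L W),
      slice_iso (LW L W (RW A PB W t)) t (counitW A PB W t))
  (Hunit : forall t : SliceOb (fobj L W),
      let s := Wstar (cart_prod CD) W (sdom (RW A PB W t)) in
      slice_iso s (RW A PB W (LW L W s)) (unitW A PB W s)) :
  forall (V : D) (f : hom V W),
    let s := Wstar (cart_prod CD) W V in
    let sf := {| sdom := V; sarr := f |} : SliceOb W in
    slice_iso s (RW A PB W (LW L W s)) (unitW A PB W s) <->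
    slice_iso sf (RW A PB W (LW L W sf)) (unitW A PB W sf).
Proof.
  intros V f s sf. split.
  - intro HV. apply (unitW_invertible_of_Wstar Hcounit (P := cart_prod CD)); [| exact HV].
    apply (unitW_invertible_Wstar_base Hcounit), Hunit.
  - intro Hf. exact (unitW_invertible_Wstar_of_slice Hcounit (Hunit _) Hf).
Qed.
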